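(* Let $v,w\ge 3$ be integers for which there exist a Steiner triple system $\mathrm{STS}(v)$ and a Steiner triple system $\mathrm{STS}(w)$, and suppose at least one of these two systems admits a zero-sum $k$-flow for some integer $k\ge 3$. Then there exists an $\mathrm{STS}(vw)$ which admits a zero-sum $k$-flow.
   Context: A Steiner triple system $\mathrm{STS}(v)$ is a pair $(X,\mathcal{B})$ where $|X|=v$ and $\mathcal{B}$ is a collection of 3-subsets (blocks) of $X$ such that every 2-subset of $X$ lies in exactly one block. More generally, for a $t$-$(v,k,\lambda)$ design $(X,\mathcal{B})$ and an integer $n\ge 2$, a zero-sum $n$-flow is a map $f:\mathcal{B}\to\{\pm1,\pm2,\ldots,\pm(n-1)\}$ such that for every point $x\in X$, $\sum_{B\in\mathcal{B},\,x\in B} f(B)=0$ (equivalently, a vector with entries in $\{\pm1,\ldots,\pm(n-1)\}$ in the null space of the point–block incidence matrix). *)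

From mathcomp Require Import all_boot all_order all_algebra.
Set Implicit Arguments. Unset Strict Implicit. Unset Printing Implicit Defensive.
Import Order.TTheory GRing.Theory Num.Theory.

Definition is_STS (v : nat) (B : {set {set 'I_v}}) : Prop :=
  (forall b, b \in B -> #|b| = 3) /\
  (forall x y : 'I_v, x != y ->
     #|[set b in B | (x \in b) && (y \in b)]| = 1).

Definition is_zero_sum_flow (v n : nat) (B : {set {set 'I_v}})
    (f : {set 'I_v} -> int) : Prop :=
  (forall b, b \in B -> (0 < `|f b| < n)%N) /\
  (forall x : 'I_v, (\sum_(b in B | x \in b) f b)%R = 0%R).

Definition has_zero_sum_flow (v n : nat) (B : {set {set 'I_v}}) : Prop :=
  exists f : {set 'I_v} -> int, is_zero_sum_flow n B f.

From mathcomp Require Import all_boot all_order all_algebra.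
From mathcomp Require Import zify ring.
Set Implicit Arguments. Unset Strict Implicit. Unset Printing Implicit Defensive.
Import GRing.Theory.

(* Let (X, B1) be an STS(v) with a zero-sum k-flow f and (Y, B2) an STS(w);
   the case where the flow lives on B2 is symmetric.  Since an STS(v) has v
   odd, we may take X = Z_v.  On Z_v x Y we use
   - the row blocks b1 x {y}, for b1 in B1 and y in Y, and
   - the transversal blocks {(g s, s) | s in b2}, for b2 in B2 and g with
     zero sum on b2.
   Two points of one row lie in exactly one row block; two points (x, y),
   (x', y') of different rows lie in exactly one transversal block, the one
   over the block {y, y', z} of B2 with value -x-x' at z.  A row block b1 x {y} gets label f b1; a transversal block with
   values x0, x1, x2 (listed by increasing row) gets chi (0 x0 + 1 x1 + 2 x2),
   where chi : Z_v -> {-2, 1, -1} sums to 0.  At a point (a, y) the row blocks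
   contribute the flow of f at a, i.e. 0.  The transversal blocks through
   (a, y) over a fixed b2 = {y, c, d} are parametrised by their value t at c,
   and their weight is an affine function of t whose slope is a difference
   of two of 0, 1, 2, a unit of Z_v since v is odd; hence their labels run
   once through chi and sum to 0. *)
Definition sts (T : finType) (B : {set {set T}}) : Prop :=
  (forall b, b \in B -> #|b| = 3) /\
  (forall x y : T, x != y ->
     #|[set b in B | (x \in b) && (y \in b)]| = 1).

Definition zsflow (T : finType) (n : nat) (B : {set {set T}})
    (f : {set T} -> int) : Prop :=
  (forall b, b \in B -> (0 < `|f b| < n)%N) /\
  (forall x : T, (\sum_(b in B | x \in b) f b)%R = 0%R).

Section Transport.
Variables (T T' : finType) (h : T -> T') (hi : T' -> T).
Hypotheses (hK : cancel h hi) (hK' : cancel hi h).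

Let h_inj : injective h := can_inj hK.

Definition image_blocks (B : {set {set T}}) : {set {set T'}} :=
  [set h @: b | b : {set T} in B].

Lemma image_blocks_inj : injective (fun b : {set T} => h @: b).
Proof. exact: imset_inj h_inj. Qed.

Lemma image_blocksK (b : {set T}) : h @^-1: (h @: b) = b.
Proof. by apply/setP => t; rewrite inE mem_imset. Qed.

Lemma image_blocks_sep (B : {set {set T}}) (P : pred {set T'}) :
  [set b' in image_blocks B | P b'] = image_blocks [set b in B | P (h @: b)].
Proof.
apply/setP => b'; rewrite inE; apply/andP/imsetP.
- by case=> /imsetP [b Bb ->] Pb; exists b; rewrite // inE Bb.
- by case=> b; rewrite inE => /andP [Bb Pb] ->; rewrite imset_f.
Qed.

Lemma sts_image (B : {set {set T}}) : sts B -> sts (image_blocks B).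
Proof.
move=> [B3 Bpair]; split=> [_ /imsetP [b Bb ->] | x' y' nxy].
  by rewrite card_imset // B3.
rewrite -(hK' x') -(hK' y') image_blocks_sep card_imset; last first.
  exact: image_blocks_inj.
rewrite -[RHS](Bpair (hi x') (hi y')); last by apply: contra nxy => /eqP/(can_inj hK') ->.
by apply: eq_card => b; rewrite !inE !mem_imset.
Qed.

Lemma zsflow_image n (B : {set {set T}}) f :
  zsflow n B f -> zsflow n (image_blocks B) (fun b' => f (h @^-1: b')).
Proof.
move=> [fB fsum]; split=> [_ /imsetP [b Bb ->] | x']; first by rewrite image_blocksK fB.
rewrite -(hK' x') -[RHS](fsum (hi x')) -big_set image_blocks_sep big_imset /=.
  by apply: eq_big => [b | b _]; rewrite ?inE ?mem_imset ?image_blocksK.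
by move=> b1 b2 _ _; apply: image_blocks_inj.
Qed.

End Transport.

Lemma sts_flow_on_ordinal (T : finType) n k (B : {set {set T}}) f :
  #|T| = n -> sts B -> zsflow k B f ->
  exists B' : {set {set 'I_n}}, is_STS B' /\ has_zero_sum_flow k B'.
Proof.
move=> cardT stsB flowB.
pose h t := cast_ord cardT (enum_rank t).
pose hi i := enum_val (cast_ord (esym cardT) i).
have hK : cancel h hi by move=> t; rewrite /h /hi cast_ordK enum_rankK.
have hK' : cancel hi h by move=> i; rewrite /h /hi enum_valK cast_ordKV.
exists (image_blocks h B); split; first exact: sts_image.
by eexists; apply: zsflow_image flowB.
Qed.

Section TripleSystems.
Variable T : finType.
Implicit Types (B : {set {set T}}) (b : {set T}).

Lemma triple_split b a : #|b| = 3 -> a \in b ->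
  exists c d, [/\ c \in b, d \in b, c != a, d != a & c != d /\ b :\ a = [set c; d]].
Proof.
move=> b3 ab; have : #|b :\ a| == 2 by move: (cardsD1 a b); rewrite ab b3 add1n => -[<-].
case/cards2P => c [d [ncd bE]].
have : (c \in b :\ a) && (d \in b :\ a) by rewrite bE !inE !eqxx orbT.
by rewrite !inE => /andP [/andP [nca cb] /andP [nda db]]; exists c, d.
Qed.

Lemma triple_third b a a' : #|b| = 3 -> a \in b -> a' \in b -> a' != a ->
  exists z, [/\ z \in b, z != a, z != a' & b :\ a = [set a'; z]].
Proof.
move=> b3 ab a'b na; have [c [d [cb db nca nda [ncd bE]]]] := triple_split b3 ab.
have : a' \in b :\ a by rewrite !inE na.
rewrite bE !inE => /orP [] /eqP ->; first by exists d; split; rewrite // eq_sym.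
by exists c; split; rewrite // setUC.
Qed.

Lemma sum_triple (R : zmodType) b a c d (F : T -> R) :
  a \in b -> c != d -> b :\ a = [set c; d] ->
  (\sum_(s in b) F s = F a + (F c + F d))%R.
Proof.
by move=> ab ncd bE; rewrite (big_setD1 a ab) bE big_setU1 ?big_set1 ?inE.
Qed.

Lemma card_sep_eq1 (S : {set {set T}}) (P : pred {set T}) b0 :
  b0 \in S -> P b0 -> (forall b, b \in S -> P b -> b = b0) ->
  #|[set b in S | P b]| = 1.
Proof.
move=> Sb0 Pb0 uniq_b0; apply/eqP/cards1P; exists b0; apply/setP => b.
by rewrite !inE; apply/andP/eqP => [[Sb Pb] | ->]; [apply: uniq_b0 | ].
Qed.

Lemma sts_block B x x' : sts B -> x != x' ->
  exists b0, [/\ b0 \in B, x \in b0, x' \in b0 &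
     forall b, b \in B -> x \in b -> x' \in b -> b = b0].
Proof.
move=> [_ Bpair] nx; have /eqP/cards1P [b0 b0E] := Bpair _ _ nx.
have : b0 \in [set b in B | (x \in b) && (x' \in b)] by rewrite b0E inE.
rewrite inE => /andP [Bb0 /andP [xb0 x'b0]]; exists b0; split => // b Bb xb x'b.
have : b \in [set b in B | (x \in b) && (x' \in b)] by rewrite inE Bb xb x'b.
by rewrite b0E inE => /eqP.
Qed.

(* The blocks through a point x partition the other points into pairs, so an
   STS on a nonempty set has an odd number of points. *)
Lemma sts_odd B : sts B -> 0 < #|T| -> odd #|T|.
Proof.
move=> [B3 Bpair] /card_gt0P [x0 _].
have pairs : #|T|.-1 = \sum_(b in B | x0 \in b) #|b :\ x0|.
  rewrite -(cardC1 x0) -sum1_card.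
  transitivity (\sum_(y | y != x0) \sum_(b in B | x0 \in b) (y \in b : nat)).
    apply: eq_bigr => y ny; rewrite -(Bpair x0 y) 1?eq_sym // -sum1_card.
    rewrite big_mkcond [RHS]big_mkcond /=; apply: eq_bigr => b _.
    by rewrite !inE; case: (b \in B) (x0 \in b) (y \in b) => [] [] [].
  rewrite exchange_big; apply: eq_bigr => b _; rewrite -sum1_card.
  rewrite big_mkcond [RHS]big_mkcond /=; apply: eq_bigr => y _.
  by rewrite !inE; case: (y \in b) (y != x0) => [] [].
have even_pred : 2 %| #|T|.-1.
  rewrite pairs dvdn_sum // => b /andP [Bb x0b].
  by move: (cardsD1 x0 b); rewrite x0b B3 // add1n => -[<-].
have n0 : 0 < #|T| by apply/card_gt0P; exists x0.
by rewrite -(prednK n0) /= -dvdn2 even_pred.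
Qed.

End TripleSystems.

Definition rank_in w (b2 : {set 'I_w}) (s : 'I_w) : nat := #|[set s' in b2 | s' < s]|.

Lemma rank_lt3 w (b2 : {set 'I_w}) s : #|b2| = 3 -> s \in b2 -> rank_in b2 s < 3.
Proof.
move=> b3 sb2; have : #|b2 :\ s| = 2 by move: (cardsD1 s b2); rewrite sb2 b3 add1n => -[<-].
move=> <-; rewrite ltnS; apply: subset_leq_card; apply/subsetP => s'.
by rewrite !inE => /andP [-> lt]; rewrite andbT neq_ltn lt.
Qed.

Lemma rank_mono w (b2 : {set 'I_w}) (s1 s2 : 'I_w) :
  s1 \in b2 -> s1 < s2 -> rank_in b2 s1 < rank_in b2 s2.
Proof.
move=> s1b2 lt; apply: proper_card; apply/properP; split.
  by apply/subsetP => s; rewrite !inE => /andP [-> lts]; apply: ltn_trans lts lt.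
by exists s1; rewrite !inE ?s1b2 ?lt // ltnn andbF.
Qed.

Lemma rank_inj w (b2 : {set 'I_w}) s1 s2 : s1 \in b2 -> s2 \in b2 -> s1 != s2 ->
  rank_in b2 s1 != rank_in b2 s2.
Proof.
move=> s1b2 s2b2; rewrite -val_eqE /= !neq_ltn => /orP [] lt.
  by rewrite (rank_mono s1b2 lt).
by rewrite (rank_mono s2b2 lt) orbT.
Qed.

(* In Z_v with v odd, the difference of two distinct elements of {0, 1, 2}
   is a unit (it is ±1 or ±2). *)
Lemma odd_unit_diff m (i j : nat) : odd m.+3 -> i < 3 -> j < 3 -> i != j ->
  ((i%:R - j%:R : 'I_m.+3) \is a GRing.unit)%R.
Proof.
move=> odd_v ilt jlt nij.
have unit12 c : (c == 1) || (c == 2) -> ((c%:R : 'I_m.+3) \is a GRing.unit)%R.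
  by case/orP => /eqP ->; rewrite (@unitZpE m.+3) ?coprimen1 ?coprimen2.
case: (ltngtP i j) => [lt | lt | eq]; last by rewrite eq eqxx in nij.
- by rewrite -opprB -natrB ?(ltnW lt) // unitrN; apply: unit12; lia.
- by rewrite -natrB ?(ltnW lt) //; apply: unit12; lia.
Qed.

(* The labels -2, 1, 1 followed by alternating 1, -1: for v odd the first v
   of them sum to zero. *)
Definition chi (i : nat) : int :=
  if i == 0 then (-2)%R else if i == 2 then 1%R else if odd i then 1%R else (-1)%R.

Lemma chi_zero_sum m : odd m.+3 -> (\sum_(i < m.+3) chi i = 0)%R.
Proof.
move=> odd_v; have [j ->] : exists j, m = j.*2.
  by exists m./2; rewrite -[LHS]odd_double_half; move: odd_v => /= /negPn /negbTE ->.
elim: j => [|j IH]; first by rewrite !big_ord_recr big_ord0.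
rewrite doubleS (big_ord_recr j.*2.+4) (big_ord_recr j.*2.+3) /= IH /chi /=.
by rewrite odd_double add0r subrr.
Qed.

Lemma chi_bound k i : 3 <= k -> (0 < `|chi i| < k)%N.
Proof. by rewrite /chi; case: k => [|[|[|k]]] //; do 3?case: ifP. Qed.

Section ProductConstruction.
Variables m w : nat.
Local Notation Zv := 'I_m.+3.
Local Notation point := (Zv * 'I_w)%type.
Variables (B1 : {set {set Zv}}) (B2 : {set {set 'I_w}}).
Hypotheses (stsB1 : sts B1) (stsB2 : sts B2).
Implicit Types (g : {ffun 'I_w -> Zv}) (p : point).

Definition row_block (b1 : {set Zv}) (y : 'I_w) : {set point} :=
  [set (x, y) | x in b1].

Definition trans_block (b2 : {set 'I_w}) (g : {ffun 'I_w -> Zv}) : {set point} :=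
  [set (g s, s) | s in b2].

Definition row_blocks : {set {set point}} :=
  [set row_block b1 y | b1 in B1, y in [set: 'I_w]].

Definition zero_sum_over (b2 : {set 'I_w}) : {set {ffun 'I_w -> Zv}} :=
  [set g : {ffun 'I_w -> Zv} | \sum_(s in b2) g s == 0]%R.

Definition trans_blocks : {set {set point}} :=
  [set trans_block b2 g | b2 in B2, g in zero_sum_over b2].

Definition product_blocks : {set {set point}} := row_blocks :|: trans_blocks.

Lemma mem_row_block (b1 : {set Zv}) y p : (p \in row_block b1 y) = (p.2 == y) && (p.1 \in b1).
Proof.
case: p => a c; apply/imsetP/andP => /= [[x xb1 [-> ->]] | [/eqP -> ab1]] //.
by exists a.
Qed.

Lemma mem_trans_block (b2 : {set 'I_w}) g p :
  (p \in trans_block b2 g) = (p.2 \in b2) && (g p.2 == p.1).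
Proof.
case: p => a c; apply/imsetP/andP => /= [[s sb2 [-> ->]] | [cb2 /eqP <-]] //.
by exists c.
Qed.

Lemma card_row_block (b1 : {set Zv}) y : #|row_block b1 y| = #|b1|.
Proof. by rewrite card_imset // => a c [->]. Qed.

Lemma card_trans_block (b2 : {set 'I_w}) g : #|trans_block b2 g| = #|b2|.
Proof. by rewrite card_imset // => a c [_ ->]. Qed.

Lemma row_blockK (b1 : {set Zv}) y : [set p.1 | p in row_block b1 y] = b1.
Proof. by rewrite -imset_comp imset_id. Qed.

Lemma trans_blockK (b2 : {set 'I_w}) g : [set p.2 | p in trans_block b2 g] = b2.
Proof. by rewrite -imset_comp imset_id. Qed.

Lemma mem_row_blocks (b : {set point}) :
  reflect (exists b1 y, b1 \in B1 /\ b = row_block b1 y) (b \in row_blocks).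
Proof.
apply: (iffP imset2P) => [[b1 y B1b1 _ ->] | [b1 [y [B1b1 ->]]]]; first by exists b1, y.
by exists b1 y; rewrite ?inE.
Qed.

Lemma mem_trans_blocks (b : {set point}) :
  reflect (exists b2 g, [/\ b2 \in B2, (\sum_(s in b2) g s = 0)%R & b = trans_block b2 g])
          (b \in trans_blocks).
Proof.
apply: (iffP imset2P) => [[b2 g B2b2 + ->] | [b2 [g [B2b2 g0 ->]]]].
  by rewrite inE => /eqP g0; exists b2, g.
by exists b2 g; rewrite // inE g0.
Qed.

(* A transversal block has one point per row, while a row block has at least
   two points in its row: the two families of blocks are disjoint. *)
Lemma row_notin_trans (b : {set point}) : b \in row_blocks -> b \notin trans_blocks.
Proof.
case/mem_row_blocks => b1 [y [B1b1 ->]]; apply/negP => /mem_trans_blocks [b2 [g [_ _ bE]]].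
have /card_gt1P [a [c [ab1 cb1 nac]]] : 1 < #|b1| by rewrite stsB1.1.
have := mem_row_block b1 y (a, y); have := mem_row_block b1 y (c, y).
rewrite bE !mem_trans_block /= ab1 cb1 eqxx => /andP [_ /eqP gc] /andP [_ /eqP ga].
by rewrite -ga -gc eqxx in nac.
Qed.

Definition completion (y c : 'I_w) (x t : Zv) : {ffun 'I_w -> Zv} :=
  [ffun s => if s == y then x else if s == c then t else (- x - t)%R].

Section TripleOverY.
Variables (b2 : {set 'I_w}) (y c d : 'I_w).
Hypotheses (yb2 : y \in b2) (ncy : c != y) (ndy : d != y) (ncd : c != d).
Hypothesis b2E : b2 :\ y = [set c; d].

Lemma completion_sum x t : (\sum_(s in b2) completion y c x t s = 0)%R.
Proof.
rewrite (sum_triple _ yb2 ncd b2E) !ffunE eqxx (negbTE ncy) eqxx (negbTE ndy).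
by rewrite eq_sym (negbTE ncd); ring.
Qed.

Lemma trans_block_completion g : (\sum_(s in b2) g s = 0)%R ->
  trans_block b2 g = trans_block b2 (completion y c (g y) (g c)).
Proof.
move=> g0; apply: eq_in_imset => s sb2; rewrite !ffunE; congr (_, _).
have gd : g d = (- g y - g c)%R.
  move: g0; rewrite (sum_triple _ yb2 ncd b2E) => /(congr1 (fun u => u - g y - g c)%R).
  by rewrite sub0r => <-; ring.
case: (eqVneq s y) => [-> // | nsy].
have : s \in b2 :\ y by rewrite !inE nsy.
by rewrite b2E !inE => /orP [] /eqP ->; rewrite ?eqxx // eq_sym (negbTE ncd).
Qed.

End TripleOverY.

Lemma product_block_card (b : {set point}) : b \in product_blocks -> #|b| = 3.
Proof.
rewrite inE => /orP [/mem_row_blocks [b1 [y [B1b1 ->]]] | /mem_trans_blocks [b2 [g [B2b2 _ ->]]]].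
- by rewrite card_row_block stsB1.1.
- by rewrite card_trans_block stsB2.1.
Qed.

Lemma same_row_pair (x x' : Zv) y : x != x' ->
  #|[set b in product_blocks | ((x, y) \in b) && ((x', y) \in b)]| = 1.
Proof.
move=> nx; have [b1 [B1b1 xb1 x'b1 uniq_b1]] := sts_block stsB1 nx.
apply: (@card_sep_eq1 _ _ _ (row_block b1 y)).
- by rewrite inE; apply/orP; left; apply/mem_row_blocks; exists b1, y.
- by rewrite /= !mem_row_block /= eqxx xb1 x'b1.
move=> b; rewrite inE.
case/orP => [/mem_row_blocks [b1' [y0 [B1b1' ->]]] | /mem_trans_blocks [b2 [g [_ _ ->]]]].
- rewrite /= !mem_row_block /= => /andP [/andP [/eqP <- xb] /andP [_ x'b]].
  by rewrite (uniq_b1 _ B1b1' xb x'b).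
- rewrite /= !mem_trans_block /= => /andP [/andP [_ /eqP gx] /andP [_ /eqP gx']].
  by rewrite -gx -gx' eqxx in nx.
Qed.

Lemma cross_pair (x x' : Zv) y y' : y != y' ->
  #|[set b in product_blocks | ((x, y) \in b) && ((x', y') \in b)]| = 1.
Proof.
move=> ny; have [b2 [B2b2 yb2 y'b2 uniq_b2]] := sts_block stsB2 ny.
have ny' : y' != y by rewrite eq_sym.
have [z [zb2 nzy nzy' b2E]] := triple_third (stsB2.1 _ B2b2) yb2 y'b2 ny'.
have ny'z : y' != z by rewrite eq_sym.
apply: (@card_sep_eq1 _ _ _ (trans_block b2 (completion y y' x x'))).
- rewrite inE; apply/orP; right; apply/mem_trans_blocks.
  by exists b2, (completion y y' x x'); split=> //; exact: completion_sum yb2 ny' nzy ny'z b2E _ _.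
- by rewrite /= !mem_trans_block /= yb2 y'b2 !ffunE eqxx (negbTE ny') !eqxx.
move=> b; rewrite inE.
case/orP => [/mem_row_blocks [b1 [y0 [_ ->]]] | /mem_trans_blocks [b2' [g [B2b2' g0 ->]]]].
- rewrite /= !mem_row_block /= => /andP [/andP [/eqP yE _] /andP [/eqP y'E _]].
  by rewrite yE y'E eqxx in ny.
- rewrite /= !mem_trans_block /= => /andP [/andP [yb2' /eqP gx] /andP [y'b2' /eqP gx']].
  have b2'E := uniq_b2 _ B2b2' yb2' y'b2'; subst b2'.
  by rewrite (trans_block_completion yb2 ny'z b2E g0) gx gx'.
Qed.

Lemma product_sts : sts product_blocks.
Proof.
split=> [b | [x y] [x' y'] np]; first exact: product_block_card.
have [yy' | ny] := eqVneq y y'; last exact: cross_pair.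
subst y'.
by apply: same_row_pair; apply: contra np => /eqP ->.
Qed.

(* The weight 0*x0 + 1*x1 + 2*x2 of a block whose points, listed by
   increasing row, have first coordinates x0, x1, x2. *)
Definition weight (b : {set point}) : Zv :=
  (\sum_(p in b) (#|[set q in b | (q.2 < p.2)%N]|)%:R * p.1)%R.

Lemma weight_trans_block (b2 : {set 'I_w}) g :
  weight (trans_block b2 g) = (\sum_(s in b2) (rank_in b2 s)%:R * g s)%R.
Proof.
rewrite /weight big_imset /=; last by move=> a c _ _ [_ ->].
apply: eq_bigr => s sb2; congr (_%:R * _)%R.
have -> : [set q in trans_block b2 g | q.2 < s] = trans_block [set s' in b2 | s' < s] g.
  by apply/setP => -[a c]; rewrite !inE !mem_trans_block !inE /= andbAC.
by rewrite card_trans_block.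
Qed.

Definition product_flow (f : {set Zv} -> int) (b : {set point}) : int :=
  if b \in row_blocks then f [set p.1 | p in b] else chi (weight b).

Lemma odd_v : odd m.+3.
Proof. by have := sts_odd stsB1; rewrite card_ord; apply. Qed.

Section Fiber.
(* The transversal blocks through (a, y) over a fixed block b2 = {y, c, d}
   of B2 are parametrised by their value t at row c; their weights are then
   an affine function of t with unit slope, so their labels sum to zero. *)
Variables (b2 : {set 'I_w}) (y c d : 'I_w) (a : Zv).
Hypotheses (B2b2 : b2 \in B2) (yb2 : y \in b2) (ncy : c != y) (ndy : d != y).
Hypotheses (ncd : c != d) (b2E : b2 :\ y = [set c; d]).

Lemma fiber_blocks :
  [set b in trans_blocks | ((a, y) \in b) && ([set p.2 | p in b] == b2)] =
  [set trans_block b2 (completion y c a t) | t in [set: Zv]].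
Proof.
apply/setP => b; rewrite !inE; apply/andP/imsetP.
- case=> /mem_trans_blocks [b2' [g [_ g0 ->]]].
  rewrite mem_trans_block trans_blockK /= => /andP [/andP [_ /eqP ga] /eqP b2'E].
  subst b2'; exists (g c); first by rewrite inE.
  by rewrite (trans_block_completion yb2 ncd b2E g0) ga.
- case=> t _ ->; rewrite trans_blockK mem_trans_block /= yb2 ffunE !eqxx.
  split=> //; apply/mem_trans_blocks; exists b2, (completion y c a t); split=> //.
  exact: completion_sum yb2 ncy ndy ncd b2E a t.
Qed.

Lemma weight_completion t :
  weight (trans_block b2 (completion y c a t)) =
  (((rank_in b2 c)%:R - (rank_in b2 d)%:R) * t +
   ((rank_in b2 y)%:R - (rank_in b2 d)%:R) * a)%R.
Proof.
rewrite weight_trans_block (sum_triple _ yb2 ncd b2E) !ffunE eqxx (negbTE ncy) eqxx.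
by rewrite (negbTE ndy) eq_sym (negbTE ncd); ring.
Qed.

Lemma weight_completion_inj :
  injective (fun t => weight (trans_block b2 (completion y c a t))).
Proof.
have b3 := stsB2.1 _ B2b2.
have /subsetP sub_b2 : b2 :\ y \subset b2 by apply: subsetDl.
have cb2 : c \in b2 by apply: sub_b2; rewrite b2E !inE eqxx.
have db2 : d \in b2 by apply: sub_b2; rewrite b2E !inE eqxx orbT.
have slope := odd_unit_diff odd_v (rank_lt3 b3 cb2) (rank_lt3 b3 db2) (rank_inj cb2 db2 ncd).
by move=> t1 t2 /=; rewrite !weight_completion => /addIr /(mulrI slope).
Qed.

Lemma fiber_flow_sum :
  (\sum_(b in trans_blocks | ((a, y) \in b) && ([set p.2 | p in b] == b2))
     chi (weight b) = 0)%R.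
Proof.
rewrite -big_set fiber_blocks big_imset /=; last first.
  move=> t1 t2 _ _ /(congr1 weight); exact: weight_completion_inj.
rewrite -[RHS](chi_zero_sum odd_v) [RHS](reindex_inj weight_completion_inj) /=.
by apply: eq_bigl => t; rewrite inE.
Qed.

End Fiber.

Lemma product_flow_row f (b1 : {set Zv}) y :
  b1 \in B1 -> product_flow f (row_block b1 y) = f b1.
Proof.
by move=> B1b1; rewrite /product_flow row_blockK ifT //; apply/mem_row_blocks; exists b1, y.
Qed.

Lemma product_flow_trans f (b : {set point}) :
  b \in trans_blocks -> product_flow f b = chi (weight b).
Proof.
move=> Tb; rewrite /product_flow ifF //; apply/negP => Rb.
by move/negP: (row_notin_trans Rb).
Qed.

Lemma row_flow_sum f a y :
  (\sum_(b1 in B1 | a \in b1) f b1 = 0)%R ->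
  (\sum_(b in row_blocks | (a, y) \in b) product_flow f b = 0)%R.
Proof.
move=> fsum; rewrite -[RHS]fsum.
transitivity (\sum_(b in [set row_block b1 y | b1 in [set b1 in B1 | a \in b1]])
                product_flow f b)%R.
  apply: eq_bigl => b; apply/andP/imsetP.
  - case=> /mem_row_blocks [b1 [y0 [B1b1 ->]]]; rewrite mem_row_block /=.
    by case/andP => /eqP <- ab1; exists b1; rewrite // inE B1b1.
  - case=> b1; rewrite inE => /andP [B1b1 ab1] ->; split; last by rewrite mem_row_block /= eqxx.
    by apply/mem_row_blocks; exists b1, y.
rewrite big_imset /=; last first.
  by move=> b1 b1' _ _ eqb; rewrite -(row_blockK b1 y) eqb row_blockK.
apply: eq_big => [b1 | b1]; first by rewrite inE.
by rewrite inE => /andP [B1b1 _]; apply: product_flow_row.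
Qed.

Lemma trans_flow_sum a y :
  (\sum_(b in trans_blocks | (a, y) \in b) chi (weight b) = 0)%R.
Proof.
rewrite (partition_big (fun b : {set point} => [set p.2 | p in b]) (fun b2 => (b2 \in B2) && (y \in b2))) /=.
  apply: big1 => b2 /andP [B2b2 yb2].
  have [c [d [_ _ ncy ndy [ncd b2E]]]] := triple_split (stsB2.1 _ B2b2) yb2.
  rewrite -[RHS](fiber_flow_sum a B2b2 yb2 ncy ndy ncd b2E).
  by apply: eq_bigl => b; rewrite andbA.
move=> b /andP [/mem_trans_blocks [b2 [g [B2b2 _ ->]]]].
by rewrite trans_blockK mem_trans_block /= => /andP [-> _]; rewrite B2b2.
Qed.

Lemma product_zsflow f k : 3 <= k -> zsflow k B1 f ->
  zsflow k product_blocks (product_flow f).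
Proof.
move=> hk [fB fsum]; split=> [b | [a y]].
  rewrite inE => /orP [/mem_row_blocks [b1 [y [B1b1 ->]]] | Tb].
  - by rewrite product_flow_row // fB.
  - by rewrite product_flow_trans // chi_bound.
rewrite (big_setIDcond _ _ row_blocks) setUK.
have -> : product_blocks :\: row_blocks = trans_blocks.
  apply/setP => b; rewrite !inE; have [Rb | //] := boolP (b \in row_blocks).
  by rewrite (negbTE (row_notin_trans Rb)).
rewrite row_flow_sum //= add0r -[RHS](trans_flow_sum a y).
by apply: eq_bigr => b /andP [Tb _]; apply: product_flow_trans.
Qed.

End ProductConstruction.

Lemma product_has_flow m w k (B1 : {set {set 'I_m.+3}}) (B2 : {set {set 'I_w}}) f :
  3 <= k -> sts B1 -> sts B2 -> zsflow k B1 f ->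
  exists B : {set {set 'I_(m.+3 * w)}}, is_STS B /\ has_zero_sum_flow k B.
Proof.
move=> hk stsB1 stsB2 flowB1.
apply: (sts_flow_on_ordinal _ (product_sts stsB1 stsB2) (product_zsflow stsB1 stsB2 hk flowB1)).
by rewrite card_prod !card_ord.
Qed.

Theorem mainTheorem1 (v w k : nat) (hv : (3 <= v)%N) (hw : (3 <= w)%N)
    (hk : (3 <= k)%N)
    (B1 : {set {set 'I_v}}) (B2 : {set {set 'I_w}})
    (h1 : is_STS B1) (h2 : is_STS B2)
    (hflow : has_zero_sum_flow k B1 \/ has_zero_sum_flow k B2) :
  exists B : {set {set 'I_(v * w)}}, is_STS B /\ has_zero_sum_flow k B.
Proof.
case: hflow => [[f flow1] | [f flow2]].
- case: v hv B1 h1 f flow1 => [|[|[|m]]] // _ B1 h1 f flow1.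
  exact: product_has_flow hk h1 h2 flow1.
- case: w hw B2 h2 f flow2 => [|[|[|n]]] // _ B2 h2 f flow2.
  by rewrite mulnC; apply: product_has_flow hk h2 h1 flow2.
Qed.
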